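(* Assume the setting in the context (deterministic $\Phi$ with $\operatorname{rank}(\widehat\Phi_1)=k$). Let $\theta_1\le\dots\le\theta_k$ be the principal angles between $\mathcal R(Q)$ and $\mathcal R(U_k)$, and $\varphi_1\le\dots\le\varphi_k$ the principal angles between $\mathcal R(P)$ and $\mathcal R(V_k)$. Then for $i=1,\dots,k$, $$\cos\theta_i\ge\frac{1}{\sqrt{1+\delta_i^{4q+4}\|\widehat\Phi_2\widehat\Phi_1^\dagger\|_2^2}},\qquad \tan\theta_i\le\delta_i^{2q+2}\|\widehat\Phi_2\widehat\Phi_1^\dagger\|_2,$$ $$\cos\varphi_i\ge\frac{1}{\sqrt{1+\delta_i^{4q+2}\|\widehat\Phi_2\widehat\Phi_1^\dagger\|_2^2}},\qquad \tan\varphi_i\le\delta_i^{2q+1}\|\widehat\Phi_2\widehat\Phi_1^\dagger\|_2.$$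
   Context: Let $A\in\mathbb R^{m\times n}$ with $m\ge n$ have full SVD $A=U\Sigma V^T$, with singular values $\sigma_1\ge\sigma_2\ge\dots\ge\sigma_n\ge 0$. Fix an integer $k\ge1$ with $\sigma_k>0$ (the paper regards $A$ as having numerical rank $k$, i.e. $\sigma_k$ well separated from $\sigma_{k+1}$). Write $U=[U_k\ U_\perp]$ with $U_k\in\mathbb R^{m\times k}$ the first $k$ left singular vectors $u_1,\dots,u_k$, $U_\perp\in\mathbb R^{m\times(m-k)}$ the rest; $V=[V_k\ V_\perp]$ with $V_k\in\mathbb R^{n\times k}$ the first $k$ right singular vectors $v_1,\dots,v_k$; $\Sigma_k=\mathrm{diag}(\sigma_1,\dots,\sigma_k)$ and $\Sigma_\perp$ the remaining diagonal block of $\Sigma$ containing $\sigma_{k+1},\dots,\sigma_n$ (so $\|\Sigma_\perp\|_2=\sigma_{k+1}$, $\|\Sigma_\perp\|_F=(\sum_{i>k}\sigma_i^2)^{1/2}$). The notation $\|\cdot\|_{2,F}$ means the statement holds for both the spectral and Frobenius norm. Let $p\ge1$ be an oversampling integer, $d=k+p<n$, and $q\ge0$ an integer (power-iteration parameter). RU-QLP (Randomized Unpivoted QLP): given $\Phi\in\mathbb R^{m\times d}$, let $\bar P\in\mathbb R^{n\times d}$ have orthonormal columns spanning the range of $(A^TA)^qA^T\Phi$ (assumed of rank $d$); compute the thin unpivoted QR factorization $A\bar P=QR$ with $Q\in\mathbb R^{m\times d}$ having orthonormal columns and $R\in\mathbb R^{d\times d}$ upper triangular; compute the thin unpivoted QR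 factorization $R^T=\widetilde P\widetilde R$; set $P=\bar P\widetilde P\in\mathbb R^{n\times d}$ and $L=\widetilde R^T$ (lower triangular), giving $\hat A=QLP^T$. Partition $R=\begin{bmatrix}R_{11}&R_{12}\\0&R_{22}\end{bmatrix}$ and $L=\begin{bmatrix}L_{11}&0\\L_{21}&L_{22}\end{bmatrix}$ with $R_{11},L_{11}\in\mathbb R^{k\times k}$. Define $\widehat\Phi_1=U_k^T\Phi\in\mathbb R^{k\times d}$ and $\widehat\Phi_2=U_\perp^T\Phi\in\mathbb R^{(m-k)\times d}$, assume $\widehat\Phi_1$ has rank $k$, and let $\dagger$ denote the Moore–Penrose inverse. Set $\delta_i=\sigma_{k+1}/\sigma_i$ for $i=1,\dots,k$ and $\gamma=\sigma_n/\sigma_1$. Principal angles between a subspace $\mathcal X$ and a $k$-dimensional subspace $\mathcal Y$ (with $\dim\mathcal X\ge k$) are the $k$ canonical angles $0\le\alpha_1\le\dots\le\alpha_k\le\pi/2$; for orthonormal bases $X$, $Y$, the values $\sin\alpha_i$ are the singular values of $(I-XX^T)Y$. *)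

From HB Require Import structures.
From mathcomp Require Import all_boot all_order all_algebra.
From mathcomp Require Import all_classical all_reals.
From mathcomp Require Import trigo.
Set Implicit Arguments.
Unset Strict Implicit.
Unset Printing Implicit Defensive.
Import Order.TTheory GRing.Theory Num.Theory.
Local Open Scope ring_scope.

Section Defs.
Variable R : realType.

Definition vnorm2 (p : nat) (x : 'cV[R]_p) : R :=
  Num.sqrt (\sum_(i < p) x i 0 ^+ 2).

Definition spec_norm (p r : nat) (M : 'M[R]_(p, r)) : R :=
  sup [set vnorm2 (M *m x) | x in [set x : 'cV[R]_r | vnorm2 x <= 1]].

Definition orthonormal_cols (p r : nat) (X : 'M[R]_(p, r)) : Prop :=
  X^T *m X = 1%:M.

(* Upper triangular (MathComp's is_trig_mx is lower triangular). *)
Definition upper_trig (p : nat) (T : 'M[R]_p) : bool := is_trig_mx T^T.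

Definition first_cols (p k : nat) (W : 'M[R]_p) : 'M[R]_(p, k) :=
  W *m pid_mx k.

(* The last p - k columns (columns k, ..., p-1) of a p x p matrix. *)
Definition last_cols (p k : nat) (W : 'M[R]_p) : 'M[R]_(p, p - k) :=
  W *m \matrix_(i < p, j < p - k) ((i : nat) == k + j)%N%:R.

Definition is_svals (p r : nat) (W : 'M[R]_(p, r)) (s : 'I_r -> R) : Prop :=
  (forall i j : 'I_r, (i <= j)%N -> s j <= s i) /\
  (forall i, 0 <= s i) /\
  exists (P : 'M[R]_(p, r)) (Q : 'M[R]_r),
    orthonormal_cols P /\ orthonormal_cols Q /\
    W = P *m diag_mx (\row_i s i) *m Q^T.

(* th_1 <= ... <= th_k are the principal angles between R(X) and R(Y),
   X, Y orthonormal bases: th_i in [0, pi/2] and the sin th_i are the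
   singular values of (I - X X^T) Y. *)
Definition principal_angles (p d k : nat) (X : 'M[R]_(p, d)) (Y : 'M[R]_(p, k))
    (th : 'I_k -> R) : Prop :=
  (forall i j : 'I_k, (i <= j)%N -> th i <= th j) /\
  (forall i, 0 <= th i <= pi / 2) /\
  is_svals ((1%:M - X *m X^T) *m Y) (fun i => sin (th (rev_ord i))).

Definition is_mp_pinv (p r : nat) (M : 'M[R]_(p, r)) (X : 'M[R]_(r, p)) : Prop :=
  [/\ M *m X *m M = M, X *m M *m X = X,
      (M *m X)^T = M *m X & (X *m M)^T = X *m M].

End Defs.

From HB Require Import structures.
From mathcomp Require Import all_boot all_order all_algebra.
From mathcomp Require Import all_classical all_reals.
From mathcomp Require Import trigo.
From mathcomp Require Import ring lra zify.
Import Order.TTheory GRing.Theory Num.Theory.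
Set Implicit Arguments.
Unset Strict Implicit.
Unset Printing Implicit Defensive.
Local Open Scope ring_scope.

(* In singular coordinates both sketches are diagonal scalings of [U^T Phi]:
   [U^T A M = Sigma^(2q+2) U^T Phi] and [V^T M = Sigma^(2q+1) U^T Phi], and
   [U^T Phi Phi1^+] has head block [I] and tail block [Phi2 Phi1^+], of norm [c].
   Dividing the first [i + 1] coordinates by [sigma_1^e, ..., sigma_(i+1)^e]
   thus shows that every vector supported on them becomes an element of [R(Q)]
   (resp. [R(P)]) after adding a perturbation orthogonal to the first [k]
   coordinates, of relative size at most [t = delta_i^e c] with [e = 2q+2]
   (resp. [2q+1]).  Such a vector has squared distance at most [t^2/(1+t^2)]
   times its squared norm from the range, and the min-max characterization of
   the singular values [sin theta_j] of [(I - Q Q^T) U_k] turns this into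
   [sin^2 theta_i (1 + t^2) <= t^2], which is the claimed bound. *)

Section SquaredNorm.
Variable R : realType.

Definition sqnorm (p : nat) (v : 'cV[R]_p) : R := \sum_(i < p) v i 0 ^+ 2.

Lemma sqnormE p (v : 'cV[R]_p) : sqnorm v = (v^T *m v) 0 0.
Proof. by rewrite /sqnorm mxE; apply: eq_bigr => i _; rewrite !mxE expr2. Qed.

Lemma sqnorm_ge0 p (v : 'cV[R]_p) : 0 <= sqnorm v.
Proof. by apply: sumr_ge0 => i _; apply: sqr_ge0. Qed.

Lemma sqnorm0 p : sqnorm (0 : 'cV[R]_p) = 0.
Proof. by rewrite /sqnorm big1 // => i _; rewrite mxE expr0n. Qed.

Lemma sqnorm_eq0 p (v : 'cV[R]_p) : (sqnorm v == 0) = (v == 0).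
Proof.
apply/eqP/eqP => [h|->]; last exact: sqnorm0.
apply/matrixP => a b; rewrite ord1 mxE.
have := @psumr_eq0P R _ predT (fun i : 'I_p => v i 0 ^+ 2) (fun i _ => sqr_ge0 _) h a isT.
by move/eqP; rewrite sqrf_eq0 => /eqP.
Qed.

Lemma sqnorm_gt0 p (v : 'cV[R]_p) : (0 < sqnorm v) = (v != 0).
Proof. by rewrite lt_def sqnorm_ge0 andbT sqnorm_eq0. Qed.

Lemma sqnormZ p (a : R) (v : 'cV[R]_p) : sqnorm (a *: v) = a ^+ 2 * sqnorm v.
Proof. by rewrite /sqnorm mulr_sumr; apply: eq_bigr => i _; rewrite mxE exprMn. Qed.

Lemma sqnorm_isometry a p (O : 'M[R]_(a, p)) (v : 'cV[R]_p) :
  O^T *m O = 1%:M -> sqnorm (O *m v) = sqnorm v.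
Proof. by move=> hO; rewrite !sqnormE trmx_mul -mulmxA (mulmxA O^T) hO mul1mx. Qed.

Lemma sqnorm_orthoD p (u g : 'cV[R]_p) (a b : R) : u^T *m g = 0 ->
  sqnorm (a *: u + b *: g) = a ^+ 2 * sqnorm u + b ^+ 2 * sqnorm g.
Proof.
move=> ug.
have cross : (u^T *m g) 0 0 = \sum_(i < p) u i 0 * g i 0.
  by rewrite mxE; apply: eq_bigr => i _; rewrite mxE.
rewrite ug mxE in cross.
rewrite /sqnorm !mulr_sumr -big_split /=.
transitivity (\sum_(i < p) (a ^+ 2 * u i 0 ^+ 2 + b ^+ 2 * g i 0 ^+ 2)
              + 2 * a * b * \sum_(i < p) u i 0 * g i 0); last by rewrite -cross mulr0 addr0.
by rewrite mulr_sumr -big_split /=; apply: eq_bigr => i _; rewrite !mxE; ring.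
Qed.

Lemma entry_sqr_le_sqnorm p (v : 'cV[R]_p) (b : 'I_p) : v b 0 ^+ 2 <= sqnorm v.
Proof. by rewrite /sqnorm (bigD1 b) //= lerDl; apply: sumr_ge0 => i _; apply: sqr_ge0. Qed.

Lemma le_sqr_of_sqrt (u c : R) : 0 <= u -> 0 <= c -> Num.sqrt u <= c -> u <= c ^+ 2.
Proof. by move=> u0 c0 h; rewrite -(sqr_sqrtr u0) lerXn2r ?nnegrE ?sqrtr_ge0. Qed.

Section SpectralNorm.
Variables (p r : nat) (H : 'M[R]_(p, r)).

Let unit_image := [set vnorm2 (H *m x) | x in [set x : 'cV[R]_r | vnorm2 x <= 1]]%classic.

Let vnorm2_0 : vnorm2 (0 : 'cV[R]_r) = 0.
Proof. by rewrite /vnorm2 -/(sqnorm 0) sqnorm0 sqrtr0. Qed.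

Let unit_image_has_sup : has_sup unit_image.
Proof.
split; first by exists (vnorm2 (H *m 0)); exists 0 => //=; rewrite vnorm2_0.
exists (Num.sqrt (\sum_(a < p) (\sum_(b < r) `|H a b|) ^+ 2)).
move=> _ [x /= x1 <-]; rewrite /vnorm2 ler_sqrt; last first.
  by apply: sumr_ge0 => i _; apply: sqr_ge0.
have {}x1 : sqnorm x <= 1.
  by rewrite -(expr1n _ 2) le_sqr_of_sqrt ?sqnorm_ge0.
apply: ler_sum => a _; rewrite mxE.
have : `|\sum_(b < r) H a b * x b 0| <= \sum_(b < r) `|H a b|.
  apply: le_trans (ler_norm_sum _ _ _) _; apply: ler_sum => b _.
  have := entry_sqr_le_sqnorm x b => xb.
  have xb1 : `|x b 0| <= 1 by rewrite ler_norml; apply/andP; split; nra.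
  by rewrite normrM ler_piMr.
by rewrite ler_norml => /andP [h1 h2]; nra.
Qed.

Lemma spec_norm_ge0 : 0 <= spec_norm H.
Proof.
apply: le_trans (sup_upper_bound unit_image_has_sup _); last first.
  by exists 0 => //=; rewrite vnorm2_0.
exact: sqrtr_ge0.
Qed.

Lemma sqnorm_mul_le_spec_norm z : sqnorm (H *m z) <= spec_norm H ^+ 2 * sqnorm z.
Proof.
have [->|z0] := eqVneq z 0; first by rewrite mulmx0 !sqnorm0 mulr0.
have zpos : 0 < sqnorm z by rewrite sqnorm_gt0.
set rz := Num.sqrt (sqnorm z).
have rz0 : 0 < rz by rewrite sqrtr_gt0.
have unit_z : sqnorm (rz^-1 *: z) = 1.
  by rewrite sqnormZ exprVn sqr_sqrtr ?sqnorm_ge0 // mulVf ?gt_eqF.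
have : unit_image (vnorm2 (H *m (rz^-1 *: z))).
  by exists (rz^-1 *: z) => //=; rewrite /vnorm2 -/(sqnorm _) unit_z sqrtr1.
move=> /(sup_upper_bound unit_image_has_sup).
rewrite /vnorm2 -/(sqnorm _) -scalemxAr sqnormZ => /le_sqr_of_sqrt.
rewrite exprVn sqr_sqrtr ?sqnorm_ge0 // => bound.
rewrite -ler_pdivrMr // mulrC; apply: bound; last exact: spec_norm_ge0.
by rewrite mulr_ge0 ?invr_ge0 ?sqnorm_ge0.
Qed.

End SpectralNorm.

End SquaredNorm.

Section MinMax.
Variable R : realType.

Definition supported_le (k j : nat) (x : 'cV[R]_k) : Prop :=
  forall l : 'I_k, (j < l)%N -> x l 0 = 0.

Lemma mulmx_pid_mxE p k r (A : 'M[R]_(p, k)) a (l : 'I_k) :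
  (A *m pid_mx r) a l = if (l < r)%N then A a l else 0.
Proof.
rewrite mxE (bigD1 l) //= big1 => [|j /negbTE jl]; last first.
  by rewrite mxE val_eqE jl mulr0.
by rewrite mxE eqxx /=; case: (l < r)%N; rewrite ?mulr1 ?mulr0 addr0.
Qed.

Lemma sqnorm_svd_ge p k (W : 'M[R]_(p, k)) (s : 'I_k -> R) (P : 'M[R]_(p, k))
    (Q : 'M[R]_k) (j : 'I_k) (x : 'cV[R]_k) :
  (forall i l : 'I_k, (i <= l)%N -> s l <= s i) -> (forall i, 0 <= s i) ->
  P^T *m P = 1%:M -> Q^T *m Q = 1%:M -> W = P *m diag_mx (\row_i s i) *m Q^T ->
  supported_le j x -> s j ^+ 2 * sqnorm x <= sqnorm (W *m (Q *m x)).
Proof.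
move=> s_decr s0 hP hQ -> xj.
rewrite !mulmxA -(mulmxA _ Q^T) hQ mulmx1 -mulmxA sqnorm_isometry //.
rewrite /sqnorm mulr_sumr; apply: ler_sum => l _.
rewrite mul_diag_mx !mxE exprMn.
have [lj|jl] := leqP l j; last by rewrite (xj l jl) expr0n /= !mulr0.
rewrite ler_wpM2r ?sqr_ge0 // lerXn2r ?nnegrE //; exact: s_decr.
Qed.

Lemma exists_supported_image k (Q : 'M[R]_k) (j1 j2 : 'I_k) :
  Q \in unitmx -> (k < j1.+1 + j2.+1)%N ->
  exists x : 'cV[R]_k, [/\ x != 0, supported_le j1 x & supported_le j2 (Q *m x)].
Proof.
move=> Qunit jk.
set S1 := (pid_mx j1.+1 : 'M[R]_k) *m Q^T.
set S2 := (pid_mx j2.+1 : 'M[R]_k).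
have rS1 : \rank S1 = j1.+1 by rewrite mxrankMfree ?row_free_unit ?unitmx_tr // rank_pid_mx.
have rS2 : \rank S2 = j2.+1 by rewrite rank_pid_mx.
have : (S1 :&: S2)%MS != 0.
  rewrite -mxrank_eq0; apply/eqP => cap0.
  have := mxrank_sum_cap S1 S2; have := rank_leq_col (S1 + S2)%MS.
  by rewrite cap0 rS1 rS2; lia.
case/rowV0Pn => r r_cap r0.
have /submxP [D1 rD1] : (r <= S1)%MS := submx_trans r_cap (capmxSl _ _).
have /submxP [D2 rD2] : (r <= S2)%MS := submx_trans r_cap (capmxSr _ _).
exists (D1 *m pid_mx j1.+1)^T; split.
- apply: contraNneq r0 => /(congr1 trmx); rewrite trmxK trmx0 rD1 mulmxA => ->.
  by rewrite mul0mx.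
- by move=> l jl; rewrite mxE mulmx_pid_mxE ltnNge jl.
- have -> : Q *m (D1 *m pid_mx j1.+1)^T = r^T by rewrite rD1 /S1 mulmxA !trmx_mul trmxK.
  by move=> l jl; rewrite mxE rD2 mulmx_pid_mxE ltnNge jl.
Qed.

Lemma sval_sqr_le p k (W : 'M[R]_(p, k)) (s : 'I_k -> R) (i : 'I_k) (mu : R) :
  is_svals W s ->
  (forall x, supported_le i x -> sqnorm (W *m x) <= mu * sqnorm x) ->
  s (rev_ord i) ^+ 2 <= mu.
Proof.
move=> [s_decr [s0 [P [Q [hP [hQ hW]]]]]] Wle.
have [x [x0 x_rev xQ_i]] : exists x : 'cV[R]_k,
    [/\ x != 0, supported_le (rev_ord i) x & supported_le i (Q *m x)].
  apply: exists_supported_image; first by case: (mulmx1_unit hQ).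
  by rewrite /= subnSK //; lia.
have := le_trans (sqnorm_svd_ge s_decr s0 hP hQ hW x_rev) (Wle _ xQ_i).
by rewrite sqnorm_isometry // ler_pM2r // sqnorm_gt0.
Qed.

End MinMax.

Section Projection.
Variables (R : realType) (m d : nat) (X : 'M[R]_(m, d)).
Hypothesis X_orth : X^T *m X = 1%:M.

Local Notation proj := (1%:M - X *m X^T).

Lemma proj_range r (C : 'M[R]_(d, r)) : proj *m (X *m C) = 0.
Proof. by rewrite mulmxBl mul1mx !mulmxA -(mulmxA X) X_orth mulmx1 subrr. Qed.

Lemma sqnorm_proj_le y : sqnorm (proj *m y) <= sqnorm y.
Proof.
have proj_idem : proj^T *m proj = proj.
  have -> : proj^T = proj by rewrite raddfB /= trmx1 trmx_mul trmxK.
  by rewrite mulmxBr mulmx1 proj_range subr0.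
rewrite !sqnormE trmx_mul -mulmxA (mulmxA proj^T) proj_idem mulmxBl mul1mx mulmxBr.
have -> : y^T *m (X *m X^T *m y) = (X^T *m y)^T *m (X^T *m y).
  by rewrite trmx_mul trmxK !mulmxA.
by rewrite [Z in Z <= _]mxE -!sqnormE [Z in _ + Z]mxE -sqnormE gerDl oppr_le0 sqnorm_ge0.
Qed.

(* Compare [u] with [lam (u + g)], [lam = 1 / (1 + t^2)], which lies in the
   range of [X]. *)
Lemma sqnorm_proj_near_range (u g : 'cV[R]_m) (t : R) :
  u^T *m g = 0 -> proj *m (u + g) = 0 -> sqnorm g <= t ^+ 2 * sqnorm u ->
  sqnorm (proj *m u) * (1 + t ^+ 2) <= t ^+ 2 * sqnorm u.
Proof.
move=> ug range gsmall.
set T := t ^+ 2; have T0 : 0 <= T by exact: sqr_ge0.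
have T1 : 0 < 1 + T by lra.
set lam := (1 + T)^-1.
have lamT : lam * (1 + T) = 1 by rewrite mulVf ?gt_eqF.
have lam0 : 0 <= lam by rewrite invr_ge0 ltW.
have -> : proj *m u = proj *m ((T * lam) *: u + (- lam) *: g).
  have -> : T * lam = 1 - lam by rewrite -lamT; ring.
  rewrite scalerBl scale1r scaleNr -addrA -opprD -scalerDr mulmxBr -scalemxAr.
  by rewrite range scaler0 subr0.
apply: le_trans (ler_wpM2r (ltW T1) (sqnorm_proj_le _)) _.
rewrite sqnorm_orthoD // sqrrN.
have key : (T * lam) ^+ 2 * sqnorm u + lam ^+ 2 * sqnorm g
           <= (T * lam) ^+ 2 * sqnorm u + lam ^+ 2 * (T * sqnorm u).
  by rewrite lerD2l ler_wpM2l ?sqr_ge0.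
apply: le_trans (ler_wpM2r (ltW T1) key) _.
have -> : ((T * lam) ^+ 2 * sqnorm u + lam ^+ 2 * (T * sqnorm u)) * (1 + T)
          = T * sqnorm u * (lam * (1 + T)) ^+ 2 by ring.
by rewrite lamT expr1n mulr1.
Qed.

End Projection.

Section PrincipalAngles.
Variable R : realType.

Lemma cos_tan_bound_of_sin (th t : R) : 0 <= th <= pi / 2 -> 0 <= t ->
  sin th ^+ 2 * (1 + t ^+ 2) <= t ^+ 2 ->
  1 / Num.sqrt (1 + t ^+ 2) <= cos th /\ tan th <= t.
Proof.
move=> /andP [th0 th1] t0 sin_le.
have cos0 : 0 <= cos th by apply: cos_ge0_pihalf; rewrite th1 andbT; have := pi_ge0 R; lra.
have cos_sq : cos th ^+ 2 = 1 - sin th ^+ 2 by rewrite -(cos2Dsin2 th) addrK.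
have cos_ge : 1 <= cos th ^+ 2 * (1 + t ^+ 2) by rewrite cos_sq mulrBl mul1r; lra.
have cos_gt0 : 0 < cos th.
  by rewrite lt_def cos0 andbT; apply: contraTneq cos_ge => ->; rewrite expr0n mul0r ler10.
have T0 : 0 <= 1 + t ^+ 2 by rewrite addr_ge0 ?sqr_ge0.
have sqrt_gt0 : 0 < Num.sqrt (1 + t ^+ 2) by rewrite sqrtr_gt0; nra.
split.
  rewrite ler_pdivrMr //.
  have : 1 <= (cos th * Num.sqrt (1 + t ^+ 2)) ^+ 2 by rewrite exprMn sqr_sqrtr.
  have : 0 <= cos th * Num.sqrt (1 + t ^+ 2) by rewrite mulr_ge0 ?sqrtr_ge0.
  nra.
rewrite /tan ler_pdivrMr //.
have : sin th ^+ 2 <= (t * cos th) ^+ 2.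
  by rewrite exprMn cos_sq; lra.
have : 0 <= t * cos th by rewrite mulr_ge0.
nra.
Qed.

Lemma principal_angle_bound m d k (O : 'M[R]_m) (X : 'M[R]_(m, d))
    (th : 'I_k -> R) (i : 'I_k) (t : R) :
  (k <= m)%N -> O^T *m O = 1%:M -> X^T *m X = 1%:M ->
  principal_angles X (first_cols k O) th -> 0 <= t ->
  (forall x : 'cV[R]_k, supported_le i x -> exists g : 'cV[R]_m,
     [/\ (pid_mx k : 'M[R]_(m, k))^T *m g = 0, sqnorm g <= t ^+ 2 * sqnorm x
       & (1%:M - X *m X^T) *m (O *m (pid_mx k *m x + g)) = 0]) ->
  1 / Num.sqrt (1 + t ^+ 2) <= cos (th i) /\ tan (th i) <= t.
Proof.
move=> km hO hX [_ [th_range svals]] t0 perturb.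
apply: cos_tan_bound_of_sin => //.
have T1 : 0 < 1 + t ^+ 2 by rewrite ltr_pwDl ?sqr_ge0.
rewrite -ler_pdivlMr //.
have := sval_sqr_le (mu := t ^+ 2 / (1 + t ^+ 2)) (i := i) svals.
rewrite rev_ordK; apply => x /perturb [g [pid_g g_small in_range]].
have pid_iso : (pid_mx k : 'M[R]_(m, k))^T *m pid_mx k = 1%:M.
  by rewrite tr_pid_mx mul_pid_mx minnn (minn_idPr km) pid_mx_1.
have u_iso : sqnorm (O *m (pid_mx k *m x)) = sqnorm x by rewrite !sqnorm_isometry.
rewrite mulrAC ler_pdivlMr // -u_iso /first_cols -!mulmxA.
apply: (sqnorm_proj_near_range hX (g := O *m g)).
- by rewrite trmx_mul -mulmxA (mulmxA O^T) hO mul1mx trmx_mul -mulmxA pid_g mulmx0.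
- by rewrite -mulmxDr.
- by rewrite sqnorm_isometry // u_iso.
Qed.

End PrincipalAngles.

Section RectDiagonal.
Variable R : realType.

Definition rdiag_mx m n (f : nat -> R) : 'M[R]_(m, n) :=
  \matrix_(i < m, j < n) (((i : nat) == j)%:R * f j).

Definition last_sel m k : 'M[R]_(m, m - k) :=
  \matrix_(i < m, j < m - k) ((i : nat) == k + j)%N%:R.

(* Entry [l] of a column vector, read as [0] beyond its length. *)
Definition nat_entry m (v : 'cV[R]_m) (l : nat) : R :=
  \sum_(a < m) ((a : nat) == l)%:R * v a 0.

Lemma sum_nat_eq_mul n l (f : nat -> R) :
  \sum_(j < n) ((l == (j : nat))%:R * f j) = (l < n)%:R * f l.
Proof.
elim: n => [|n IH]; first by rewrite big_ord0 ltn0 mul0r.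
rewrite big_ord_recr /= IH ltnS.
by case: (ltngtP l n) => [ln|nl|->]; rewrite ?mul0r ?addr0 ?add0r.
Qed.

Lemma nat_entry_ord m (v : 'cV[R]_m) (a : 'I_m) : nat_entry v a = v a 0.
Proof.
rewrite /nat_entry (bigD1 a) //= eqxx mul1r big1 ?addr0 // => b /negbTE ba.
by rewrite val_eqE ba mul0r.
Qed.

Lemma nat_entry_ge m (v : 'cV[R]_m) l : (m <= l)%N -> nat_entry v l = 0.
Proof.
move=> ml; rewrite /nat_entry big1 // => a _.
by rewrite (_ : (a : nat) == l = false) ?mul0r //; apply/negbTE; have := ltn_ord a; lia.
Qed.

Lemma tr_pid_mulmxE p k (v : 'cV[R]_p) (b : 'I_k) :
  ((pid_mx k : 'M[R]_(p, k))^T *m v) b 0 = nat_entry v b.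
Proof.
rewrite mxE; apply: eq_bigr => a _; rewrite !mxE.
by case: eqP => [->|]; rewrite ?ltn_ord.
Qed.

Lemma pid_mulmxE p k (x : 'cV[R]_k) (l : 'I_p) :
  ((pid_mx k : 'M[R]_(p, k)) *m x) l 0 = nat_entry x l.
Proof.
rewrite mxE; apply: eq_bigr => a _; rewrite mxE eq_sym.
by case: eqP => [<-|]; rewrite ?ltn_ord.
Qed.

Lemma rdiag_mulmxE m' m (gam : nat -> R) (v : 'cV[R]_m) (l : 'I_m') :
  (rdiag_mx m' m gam *m v) l 0 = gam l * nat_entry v l.
Proof.
rewrite mxE /nat_entry mulr_sumr; apply: eq_bigr => a _.
by rewrite mxE eq_sym; case: eqP => [->|]; rewrite ?mul1r ?mul0r ?mulr0.
Qed.

Lemma sqnorm_tr_last_sel m k (v : 'cV[R]_m) : (k <= m)%N ->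
  sqnorm ((last_sel m k)^T *m v) = \sum_(k <= l < m) nat_entry v l ^+ 2.
Proof.
move=> km; rewrite -[in RHS](add0n k) big_addn big_mkord /sqnorm.
apply: eq_bigr => j _; rewrite mxE /nat_entry addnC; congr (_ ^+ 2).
by apply: eq_bigr => a _; rewrite !mxE.
Qed.

Lemma eq_rdiag_mx m n (f g : nat -> R) :
  (forall l, (l < m)%N -> (l < n)%N -> f l = g l) -> rdiag_mx m n f = rdiag_mx m n g.
Proof.
move=> fg; apply/matrixP => a b; rewrite !mxE.
by case: eqP => [ab|]; rewrite ?mul0r // fg // -ab.
Qed.

Lemma tr_rdiag_mx m n (f : nat -> R) : (rdiag_mx m n f)^T = rdiag_mx n m f.
Proof. by apply/matrixP => a b; rewrite !mxE eq_sym; case: eqP => [->|]; rewrite ?mul0r. Qed.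

Lemma rdiag_mulmx m n p (f g : nat -> R) :
  rdiag_mx m n f *m rdiag_mx n p g = rdiag_mx m p (fun l => (l < n)%:R * (f l * g l)).
Proof.
apply/matrixP => a b; rewrite /rdiag_mx !mxE.
rewrite (eq_bigr (fun j : 'I_n => ((a : nat) == j)%:R * (f j * ((j == b :> nat)%:R * g b)))).
  rewrite (sum_nat_eq_mul n a (fun j => f j * ((j == b)%:R * g b))).
  by case: eqP => [->|]; rewrite ?mul0r ?mulr0 ?mul1r ?mulr1 // mulrC.
by move=> j _; rewrite !mxE -mulrA.
Qed.

Lemma rdiag_mx_exp n (f : nat -> R) e :
  (rdiag_mx n n f) ^+ e = rdiag_mx n n (fun l => f l ^+ e).
Proof.
elim: e => [|e IH].
  by apply/matrixP => a b; rewrite expr0 !mxE expr0 mulr1.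
rewrite exprS IH -mulmxE rdiag_mulmx; apply: eq_rdiag_mx => l ln _.
by rewrite ln mul1r exprS.
Qed.

Lemma expr_conj_orth n (V D : 'M[R]_n) e : V^T *m V = 1%:M ->
  (V *m D *m V^T) ^+ e = V *m D ^+ e *m V^T.
Proof.
move=> hV; elim: e => [|e IH]; first by rewrite !expr0 -idmxE mulmx1 (mulmx1C hV).
by rewrite exprSr IH exprSr -!mulmxE !mulmxA -(mulmxA _ V^T V) hV mulmx1.
Qed.

End RectDiagonal.

Arguments rdiag_mx {R} m n f.
Arguments last_sel {R} m k.

Section DiagonalSketch.
Variables (R : realType) (m m' k r : nat) (gam : nat -> R).
Variables (B : 'M[R]_(m, r)) (Bd : 'M[R]_(r, k)) (c : R) (i : 'I_k).
Hypotheses (km' : (k <= m')%N) (m'm : (m' <= m)%N).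
Hypothesis gam_ge0 : forall l, 0 <= gam l.
Hypothesis gam_decr : forall l j, (l <= j)%N -> (j < m')%N -> gam j <= gam l.
Hypothesis gam_i_gt0 : 0 < gam i.
Hypothesis B_head : (pid_mx k : 'M[R]_(m, k))^T *m B *m Bd = 1%:M.
Hypothesis B_tail :
  forall z, sqnorm ((last_sel m k)^T *m B *m Bd *m z) <= c ^+ 2 * sqnorm z.

Local Notation G := (rdiag_mx m' m gam).

Lemma sqnorm_scaled_tail_le (v : 'cV[R]_m) (g : 'cV[R]_m') :
  (forall l : 'I_m', g l 0 = if (l < k)%N then 0 else gam l * nat_entry v l) ->
  sqnorm g <= gam k ^+ 2 * sqnorm ((last_sel m k)^T *m v).
Proof.
move=> gE.
set F := fun l : nat => (if (l < k)%N then 0 else gam l * nat_entry v l) ^+ 2.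
have -> : sqnorm g = \sum_(k <= l < m') F l.
  rewrite /sqnorm (eq_bigr (F \o val)) => [|l _]; last by rewrite gE.
  rewrite -(big_mkord xpredT) (@big_cat_nat _ _ _ k 0 m' _ _ (leq0n k) km') /=.
  by rewrite big_nat big1 ?add0r // => l /andP [_ lk]; rewrite /F lk expr0n.
rewrite sqnorm_tr_last_sel ?(leq_trans km') // mulr_sumr.
rewrite [X in _ <= X](@big_cat_nat _ _ _ m' k m _ _ km' m'm) /= -[X in X <= _]addr0.
apply: lerD; last by apply: sumr_ge0 => l _; rewrite mulr_ge0 ?sqr_ge0.
rewrite big_nat_cond [X in _ <= X]big_nat_cond.
apply: ler_sum => l /andP [/andP [kl lm'] _].
by rewrite /F ltnNge kl /= exprMn ler_wpM2r ?sqr_ge0 // lerXn2r ?nnegrE ?gam_decr.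
Qed.

(* Solve for the head coordinates [z_l = x_l / gam_l]; the perturbation [g]
   is what the tail coordinates of [B Bd z] become after scaling by [G]. *)
Lemma diag_sketch_perturbation (x : 'cV[R]_k) : supported_le i x ->
  exists (z : 'cV[R]_k) (g : 'cV[R]_m'),
    [/\ G *m (B *m (Bd *m z)) = pid_mx k *m x + g,
        (pid_mx k : 'M[R]_(m', k))^T *m g = 0 &
        sqnorm g <= (gam k / gam i) ^+ 2 * c ^+ 2 * sqnorm x].
Proof.
move=> xi.
have ik : (i < k)%N := ltn_ord i.
have gam_pos l : (l <= i)%N -> 0 < gam l.
  by move=> li; apply: lt_le_trans gam_i_gt0 (gam_decr li _); lia.
set z : 'cV[R]_k := \col_l (x l 0 / gam l).
set v := B *m (Bd *m z).
have v_head (l : 'I_k) : nat_entry v l = z l 0.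
  by rewrite -tr_pid_mulmxE /v !mulmxA B_head mul1mx.
set g := G *m v - pid_mx k *m x.
have gE (l : 'I_m') : g l 0 = if (l < k)%N then 0 else gam l * nat_entry v l.
  rewrite /g mxE [Z in _ + Z]mxE rdiag_mulmxE pid_mulmxE.
  case: ltnP => lk; last by rewrite (nat_entry_ge x) // subr0.
  rewrite -[l : nat]/(Ordinal lk : nat) v_head nat_entry_ord mxE.
  have [li|il] := leqP (Ordinal lk) i; last by rewrite xi // mul0r mulr0 subrr.
  by rewrite mulrCA divff ?mulr1 ?subrr // gt_eqF // gam_pos.
exists z, g; split.
- by rewrite /g addrC subrK.
- apply/matrixP => b j; rewrite ord1 tr_pid_mulmxE mxE.
  have bm' : (b < m')%N by apply: leq_trans (ltn_ord b) km'.
  by rewrite (_ : (b : nat) = Ordinal bm') // nat_entry_ord gE /= ltn_ord.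
have head_bound : sqnorm z <= sqnorm x / gam i ^+ 2.
  rewrite /sqnorm mulr_suml; apply: ler_sum => l _; rewrite mxE.
  have [li|il] := leqP l i; last by rewrite xi // !mul0r expr0n /= mul0r.
  rewrite expr_div_n ler_wpM2l ?sqr_ge0 // lef_pV2 ?posrE ?exprn_gt0 ?gam_pos //.
  by rewrite lerXn2r ?nnegrE ?gam_decr //; lia.
apply: le_trans (sqnorm_scaled_tail_le gE) _.
rewrite /v !mulmxA.
apply: le_trans (ler_wpM2l (sqr_ge0 _) (B_tail z)) _.
apply: le_trans (ler_wpM2l (sqr_ge0 _) (ler_wpM2l (sqr_ge0 c) head_bound)) _.
rewrite [leRHS](_ : _ = gam k ^+ 2 * (c ^+ 2 * (sqnorm x / gam i ^+ 2))) //.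
by rewrite expr_div_n; ring.
Qed.

Lemma diag_sketch_angle_bound d (O : 'M[R]_m') (X : 'M[R]_(m', d))
    (C : 'M[R]_(d, k)) (th : 'I_k -> R) :
  O^T *m O = 1%:M -> X^T *m X = 1%:M -> principal_angles X (first_cols k O) th ->
  0 <= c -> O^T *m (X *m C) = G *m B *m Bd ->
  let t := gam k / gam i * c in
  1 / Num.sqrt (1 + t ^+ 2) <= cos (th i) /\ tan (th i) <= t.
Proof.
move=> hO hX angles c0 range t.
have OOt : O *m O^T = 1%:M := mulmx1C hO.
apply: (principal_angle_bound km' hO hX angles).
  by rewrite /t !mulr_ge0 ?invr_ge0.
move=> x /diag_sketch_perturbation [z [g [Gz pid_g g_small]]].
exists g; split=> //; first by rewrite /t exprMn.
have -> : pid_mx k *m x + g = O^T *m (X *m (C *m z)).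
  by rewrite -Gz !mulmxA -range !mulmxA.
by rewrite mulmxA OOt mul1mx proj_range.
Qed.

End DiagonalSketch.

Section TruncatedPowers.
Variables (R : realType) (n : nat) (sigma : nat -> R).
Hypothesis s_decr : forall i j, (i <= j)%N -> (j < n)%N -> sigma j <= sigma i.
Hypothesis s_ge0 : forall j, (j < n)%N -> 0 <= sigma j.

Definition trunc_pow (e l : nat) : R := (l < n)%:R * sigma l ^+ e.

Lemma trunc_pow_ge0 e l : 0 <= trunc_pow e l.
Proof. by rewrite /trunc_pow; case: ltnP => ln; rewrite ?mul0r ?mul1r ?exprn_ge0 ?s_ge0. Qed.

Lemma trunc_pow_decr e l j : (l <= j)%N -> trunc_pow e j <= trunc_pow e l.
Proof.
move=> lj; rewrite {1}/trunc_pow; case: ltnP => jn; last by rewrite mul0r trunc_pow_ge0.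
rewrite /trunc_pow (leq_ltn_trans lj jn) !mul1r lerXn2r ?nnegrE ?s_ge0 ?s_decr //.
exact: leq_ltn_trans lj jn.
Qed.

Lemma trunc_pow_ratio e i j : (i < n)%N -> (j < n)%N ->
  trunc_pow e j / trunc_pow e i = (sigma j / sigma i) ^+ e.
Proof. by move=> i_n j_n; rewrite /trunc_pow i_n j_n !mul1r expr_div_n. Qed.

Lemma trunc_pow_sketch_angle_bound e m m' k r d (B : 'M[R]_(m, r))
    (Bd : 'M[R]_(r, k)) (c : R) (i : 'I_k) (O : 'M[R]_m') (X : 'M[R]_(m', d))
    (C : 'M[R]_(d, k)) (th : 'I_k -> R) :
  (k < n)%N -> (k <= m')%N -> (m' <= m)%N -> 0 < sigma i ->
  (pid_mx k : 'M[R]_(m, k))^T *m B *m Bd = 1%:M ->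
  (forall z, sqnorm ((last_sel m k)^T *m B *m Bd *m z) <= c ^+ 2 * sqnorm z) ->
  O^T *m O = 1%:M -> X^T *m X = 1%:M -> principal_angles X (first_cols k O) th ->
  0 <= c -> O^T *m (X *m C) = rdiag_mx m' m (trunc_pow e) *m B *m Bd ->
  1 / Num.sqrt (1 + (sigma k / sigma i) ^+ (e * 2) * c ^+ 2) <= cos (th i) /\
  tan (th i) <= (sigma k / sigma i) ^+ e * c.
Proof.
move=> kn km' m'm si_pos B_head B_tail hO hX angles c0 range.
have i_n : (i < n)%N by apply: ltn_trans kn.
have gam_pos : 0 < trunc_pow e i by rewrite /trunc_pow i_n mul1r exprn_gt0.
have := diag_sketch_angle_bound km' m'm (trunc_pow_ge0 e)
  (fun l j lj _ => trunc_pow_decr e lj) gam_pos B_head B_tail hO hX angles c0 range.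
by rewrite /= trunc_pow_ratio // exprMn -exprM.
Qed.

End TruncatedPowers.

Section SvdPowers.
Variables (R : realType) (m n : nat) (U : 'M[R]_m) (V : 'M[R]_n) (sigma : nat -> R).
Variable A : 'M[R]_(m, n).
Hypotheses (nm : (n <= m)%N) (hU : U^T *m U = 1%:M) (hV : V^T *m V = 1%:M).
Hypothesis svdA : A = U *m rdiag_mx m n sigma *m V^T.

Lemma svd_gram : A^T *m A = V *m rdiag_mx n n (fun l => sigma l ^+ 2) *m V^T.
Proof.
rewrite svdA !trmx_mul !trmxK tr_rdiag_mx !mulmxA -(mulmxA _ U^T U) hU mulmx1.
rewrite -(mulmxA V (rdiag_mx n m sigma)) rdiag_mulmx; congr (_ *m _ *m _).
apply: eq_rdiag_mx => l ln _.
by rewrite (leq_trans ln nm) mul1r expr2.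
Qed.

Lemma svd_power_rowsE q :
  V^T *m ((A^T *m A) ^+ q *m A^T) = rdiag_mx n m (trunc_pow n sigma (2 * q + 1)) *m U^T.
Proof.
rewrite svd_gram expr_conj_orth // rdiag_mx_exp svdA !trmx_mul !trmxK tr_rdiag_mx.
rewrite !mulmxA hV mul1mx -(mulmxA _ V^T V) hV mulmx1 rdiag_mulmx.
congr (_ *m _); apply: eq_rdiag_mx => l ln _.
by rewrite /trunc_pow ln -exprM exprD expr1.
Qed.

Lemma svd_power_colsE q :
  U^T *m (A *m ((A^T *m A) ^+ q *m A^T))
  = rdiag_mx m m (trunc_pow n sigma (2 * q + 2)) *m U^T.
Proof.
set W := (_ ^+ q *m _).
have -> : U^T *m (A *m W) = rdiag_mx m n sigma *m (V^T *m W).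
  by rewrite svdA !mulmxA hU mul1mx.
rewrite /W svd_power_rowsE mulmxA rdiag_mulmx; congr (_ *m _); apply: eq_rdiag_mx => l _ _.
by rewrite /trunc_pow; case: (l < n)%N; rewrite ?mul0r ?mulr0 // !mul1r -exprS addn1 addn2.
Qed.

End SvdPowers.

Lemma mulmx_mp_pinv_row_free (R : realType) p r (M : 'M[R]_(p, r)) (X : 'M[R]_(r, p)) :
  row_free M -> is_mp_pinv M X -> M *m X = 1%:M.
Proof. by move=> Mfree [MXM _ _ _]; apply: (row_free_inj Mfree); rewrite mul1mx. Qed.

Lemma orthonormal_cols_mul (R : realType) p d e (X : 'M[R]_(p, d)) (Y : 'M[R]_(d, e)) :
  orthonormal_cols X -> orthonormal_cols Y -> orthonormal_cols (X *m Y).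
Proof.
by move=> hX hY; rewrite /orthonormal_cols trmx_mul -mulmxA (mulmxA X^T) hX mul1mx.
Qed.

Lemma submx_tr_factor (F : fieldType) p r s (M : 'M[F]_(p, r)) (P : 'M[F]_(p, s)) :
  (M^T <= P^T)%MS -> exists T, M = P *m T.
Proof. by case/submxP => D MD; exists D^T; rewrite -[M]trmxK MD trmx_mul trmxK. Qed.

Theorem corollary2 (R : realType) (m n k p q : nat)
    (A : 'M[R]_(m, n)) (U : 'M[R]_m) (V : 'M[R]_n) (sigma : nat -> R)
    (Phi : 'M[R]_(m, k + p)) (Pbar : 'M[R]_(n, k + p))
    (Q : 'M[R]_(m, k + p)) (Rm : 'M[R]_(k + p))
    (Ptil : 'M[R]_(k + p)) (Rtil : 'M[R]_(k + p))
    (Phi1dag : 'M[R]_(k + p, k))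
    (theta phi : 'I_k -> R) :
  (n <= m)%N -> (1 <= k)%N -> (1 <= p)%N -> (k + p < n)%N ->
  U^T *m U = 1%:M -> V^T *m V = 1%:M ->
  (forall i j, (i <= j)%N -> (j < n)%N -> sigma j <= sigma i) ->
  (forall j, (j < n)%N -> 0 <= sigma j) ->
  A = U *m (\matrix_(i < m, j < n) (((i : nat) == j)%:R * sigma j)) *m V^T ->
  0 < sigma k.-1 ->
  orthonormal_cols Pbar ->
  let M := (A^T *m A) ^+ q *m A^T *m Phi in
  \rank M = (k + p)%N ->
  (Pbar^T == M^T)%MS ->
  orthonormal_cols Q -> upper_trig Rm -> A *m Pbar = Q *m Rm ->
  orthonormal_cols Ptil -> upper_trig Rtil -> Rm^T = Ptil *m Rtil ->
  let P := Pbar *m Ptil in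
  let Uk := first_cols k U in
  let Vk := first_cols k V in
  let Phi1 := Uk^T *m Phi in
  let Phi2 := (last_cols k U)^T *m Phi in
  \rank Phi1 = k ->
  is_mp_pinv Phi1 Phi1dag ->
  principal_angles Q Uk theta ->
  principal_angles P Vk phi ->
  let c := spec_norm (Phi2 *m Phi1dag) in
  forall i : 'I_k,
    let delta := sigma k / sigma i in
    [/\ cos (theta i) >= 1 / Num.sqrt (1 + delta ^+ (4 * q + 4) * c ^+ 2),
        tan (theta i) <= delta ^+ (2 * q + 2) * c,
        cos (phi i) >= 1 / Num.sqrt (1 + delta ^+ (4 * q + 2) * c ^+ 2)
      & tan (phi i) <= delta ^+ (2 * q + 1) * c].
Proof.
move=> nm _ _ kpn hU hV s_decr s_ge0 svdA s_pos hPbar M _ hPM hQ _ hAPQ hPtil _ _.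
move=> P Uk Vk Phi1 Phi2 rPhi1 pinv theta_ang phi_ang c i delta.
have [kn km] : (k < n)%N /\ (k <= m)%N by split; lia.
have si_pos : 0 < sigma i.
  by rewrite (lt_le_trans s_pos) // s_decr //; have := ltn_ord i; lia.
have [T MT] : exists T, M = Pbar *m T by apply: submx_tr_factor; case/andP: hPM.
have head : (pid_mx k : 'M_(m, k))^T *m (U^T *m Phi) *m Phi1dag = 1%:M.
  have -> : (pid_mx k : 'M_(m, k))^T *m (U^T *m Phi) = Phi1.
    by rewrite /Phi1 /Uk /first_cols trmx_mul mulmxA.
  by rewrite mulmx_mp_pinv_row_free // /row_free rPhi1.
have tail z : sqnorm ((last_sel m k)^T *m (U^T *m Phi) *m Phi1dag *m z) <= c ^+ 2 * sqnorm z.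
  by rewrite mulmxA -trmx_mul; apply: sqnorm_mul_le_spec_norm.
have theta_range : U^T *m (Q *m (Rm *m T *m Phi1dag))
    = rdiag_mx m m (trunc_pow n sigma (2 * q + 2)) *m (U^T *m Phi) *m Phi1dag.
  rewrite !mulmxA -(mulmxA U^T Q) -hAPQ mulmxA -(mulmxA _ Pbar) -MT -!(mulmxA U^T A).
  by rewrite -(svd_power_colsE nm hU hV svdA) !mulmxA.
have phi_range : V^T *m (P *m (Ptil^T *m T *m Phi1dag))
    = rdiag_mx n m (trunc_pow n sigma (2 * q + 1)) *m (U^T *m Phi) *m Phi1dag.
  rewrite !mulmxA -(mulmxA _ Ptil) (mulmx1C hPtil) mulmx1 -(mulmxA V^T Pbar) -MT.
  by rewrite -(svd_power_rowsE nm hU hV svdA) !mulmxA.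
have hP : orthonormal_cols P := orthonormal_cols_mul hPbar hPtil.
have [cth tth] := trunc_pow_sketch_angle_bound s_decr s_ge0 kn km (leqnn m) si_pos
  head tail hU hQ theta_ang (spec_norm_ge0 _) theta_range.
have [cph tph] := trunc_pow_sketch_angle_bound s_decr s_ge0 kn (ltnW kn) nm si_pos
  head tail hV hP phi_ang (spec_norm_ge0 _) phi_range.
rewrite -/delta in cth tth cph tph.
have -> : (4 * q + 4 = (2 * q + 2) * 2)%N by lia.
have -> : (4 * q + 2 = (2 * q + 1) * 2)%N by lia.
by split.
Qed.
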